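(* Every global protocol that is implementable under $\mathtt{bag}$ is implementable under $\mathtt{p2p}$, and every global protocol that is implementable under $\mathtt{p2p}$ is implementable under $\mathtt{sb}$.
   Context: Alphabets. $\mathcal{P}$ participants, $\mathcal{V}$ message values. $\Gamma=\{p\to q:m\mid p,q\in\mathcal{P},m\in\mathcal{V}\}$. $\Sigma=\Sigma_!\cup\Sigma_?$ with $\mathsf{snd}(p,q,m)$ ($p$ sends $m$ to $q$) and $\mathsf{rcv}(p,q,m)$ ($q$ receives $m$ from $p$); $\Sigma_p$ = sends by $p$ and receives by $p$. $w\Downarrow_\Delta$ deletes letters outside $\Delta$; $\le$ prefix order, $\mathrm{pref}$ finite prefixes. $\mathrm{split}:\Gamma^\infty\to\Sigma^\infty$, $p\to q:m\mapsto\mathsf{snd}(p,q,m)\mathsf{rcv}(p,q,m)$. $w\equiv w'$ iff equal projections onto every $\Sigma_p$; $[W]_\equiv$ closure under $\equiv$. Network architectures. Channels $C$, $\xi:\mathcal{P}\times\mathcal{P}\to C$, buffers with contents $B$, empty $b_0$, partial $\mathit{insert}(\mu),\mathit{remove}(\mu)$ for $\mu\in\mathcal{P}\times\mathcal{P}\times\mathcal{V}$. Channel states map channels to contents, initially all $b_0$ ($\chi_0$); $\mathsf{snd}(p,q,m)$ inserts $(p,q,m)$ into channel $\xi(p,q)$, $\mathsf{rcv}(p,q,m)$ removes it from $\xi(p,q)$. A word is channel-compliant if all operations are defined (infinite words: all finite prefixes); $\mathcal{L}(\mathbb{A})$ is the set of such words. FIFO buffers: sequences, insert appends, $\mathit{remove}(\mu)$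 defined iff $\mu$ is at the head and then removes it. Bag buffers: finite multisets, insert adds a copy, $\mathit{remove}(\mu)$ defined iff $\mu$ present, removes a copy. $\mathtt{p2p}$: FIFO, $\xi(p,q)=(p,q)$. $\mathtt{sb}$: FIFO, $C=\mathcal{P}$, $\xi(p,q)=p$. $\mathtt{bag}$: bag buffers, single channel. CLTS over $\mathbb{A}$: family of deterministic LTSs $T_p$ over $\Sigma_p$; a send moves the sender and inserts into the channel, a receive moves the receiver and removes from the channel (must be defined). Final configuration: all local states final and channels empty ($\chi_0$). Language: traces of finite runs ending in final configurations plus traces of infinite runs. Deadlock-free: every reachable non-final configuration has an outgoing transition. Global protocol: LTS $\mathcal{S}=(S,\Gamma,T,s_0,F)$ that is sink-final (final states have no outgoing transitions), has sender-driven choice (all outgoing transitions of a state share their sender and have pairwise distinct labels), and is deadlock-free (every reachable state is final or has an outgoing transition); $\mathcal{L}(\mathcal{S})$ is its set of maximal traces (finite ending in $F$, or infinite). Semantics: $\mathcal{L}_{\mathbb{A}}(\mathcal{S})=([\Sigma^*\cap\mathrm{split}(\mathcal{L}(\mathcal{S}))]_\equiv\cap\mathcal{L}(\mathbb{A}))\cup\{w\in\Sigma^\omega\mid\forall\text{ finite }u\le w.\ u\in\mathrm{pref}([\mathrm{split}(\mathcal{L}(\mathcal{S}))]_\equiv\cap\mathcal{L}(\mathbb{A}))\}$. $\mathcal{S}$ is implementable under $\mathbb{A}$ if there is a deadlock-free CLTS over $\mathbb{A}$ whose language equals $\mathcal{L}_{\mathbb{A}}(\mathcal{S})$. *)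

From mathcomp Require Import all_boot.
Set Implicit Arguments. Unset Strict Implicit. Unset Printing Implicit Defensive.

Inductive word (A : Type) : Type :=
| Fin of seq A
| Inf of (nat -> A).
Arguments Fin {A} _.
Arguments Inf {A} _.

Definition isFin (A : Type) (w : word A) : bool :=
  if w is Fin _ then true else false.

Definition wnth (A : Type) (w : word A) (i : nat) : option A :=
  match w with Fin s => onth s i | Inf f => Some (f i) end.

(* the k-th letter of the projection w⇓D is a *)
Definition proj_at (A : Type) (D : pred A) (w : word A) (k : nat) (a : A) : Prop :=
  exists i, [/\ wnth w i = Some a, D a &
     count (fun j => oapp D false (wnth w j)) (iota 0 i) = k].

Definition same_proj (A : Type) (D : pred A) (w w' : word A) : Prop :=
  forall k a, proj_at D w k a <-> proj_at D w' k a.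

Definition prefix_of (A : Type) (u : seq A) (w : word A) : Prop :=
  forall i, i < size u -> wnth w i = onth u i.

Definition pref (A : Type) (L : word A -> Prop) (u : seq A) : Prop :=
  exists w, L w /\ prefix_of u w.

Section Protocols.
Variables (P : finType) (V : eqType).

(* Gamma : p -> q : m  is represented by the triple (p, q, m) *)
Definition gletter := (P * P * V)%type.

Inductive event : Type :=
| Snd of P & P & V   (* snd(p,q,m): p sends m to q *)
| Rcv of P & P & V.  (* rcv(p,q,m): q receives m from p *)

Definition active (e : event) : P :=
  match e with Snd p _ _ => p | Rcv _ q _ => q end.

Definition Sigma_p (p : P) : pred event := fun e => active e == p.

Definition sequiv (w w' : word event) : Prop :=
  forall p : P, same_proj (Sigma_p p) w w'.

Definition eclosure (W : word event -> Prop) (w : word event) : Prop :=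
  exists w', W w' /\ sequiv w' w.

Definition snd_of (g : gletter) : event := Snd g.1.1 g.1.2 g.2.
Definition rcv_of (g : gletter) : event := Rcv g.1.1 g.1.2 g.2.

Definition split (w : word gletter) : word event :=
  match w with
  | Fin s => Fin (flatten (map (fun g => [:: snd_of g; rcv_of g]) s))
  | Inf f => Inf (fun i => if odd i then rcv_of (f i./2) else snd_of (f i./2))
  end.

Record arch : Type := Arch {
  chan : eqType;
  xi : P -> P -> chan;
  buf : Type;
  b0 : buf;
  ins : gletter -> buf -> option buf;
  rmv : gletter -> buf -> option buf
}.

Definition chstate (A : arch) := chan A -> buf A.
Definition chi0 (A : arch) : chstate A := fun _ => b0 A.

Definition upd (A : arch) (chi : chstate A) (c : chan A) (b : buf A) : chstate A :=
  fun c' => if c' == c then b else chi c'.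

Definition chstep (A : arch) (chi : chstate A) (e : event) : option (chstate A) :=
  match e with
  | Snd p q m => omap (upd chi (xi A p q)) (ins (p, q, m) (chi (xi A p q)))
  | Rcv p q m => omap (upd chi (xi A p q)) (rmv (p, q, m) (chi (xi A p q)))
  end.

Definition run_ch (A : arch) (s : seq event) : option (chstate A) :=
  foldl (fun o e => obind (fun chi => chstep chi e) o) (Some (@chi0 A)) s.

Definition inLA (A : arch) (w : word event) : Prop :=
  match w with
  | Fin s => isSome (run_ch A s)
  | Inf f => forall n, isSome (run_ch A (mkseq f n))
  end.

Definition fifo_ins (mu : gletter) (b : seq gletter) : option (seq gletter) :=
  Some (rcons b mu).
Definition fifo_rmv (mu : gletter) (b : seq gletter) : option (seq gletter) :=
  match b with x :: b' => if x == mu then Some b' else None | [::] => None end.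

(* bag buffers: finite multisets, represented by their multiplicity function *)
Definition bag_ins (mu : gletter) (b : gletter -> nat) : option (gletter -> nat) :=
  Some (fun x => b x + (x == mu)).
Definition bag_rmv (mu : gletter) (b : gletter -> nat) : option (gletter -> nat) :=
  if 0 < b mu then Some (fun x => b x - (x == mu)) else None.

Definition p2p : arch :=
  @Arch (prod P P) (fun p q => (p, q)) (seq gletter) [::] fifo_ins fifo_rmv.
Definition sb : arch :=
  @Arch P (fun p q => p) (seq gletter) [::] fifo_ins fifo_rmv.
Definition bag : arch :=
  @Arch unit (fun _ _ => tt) (gletter -> nat) (fun _ => 0) bag_ins bag_rmv.

(* T_p is deterministic over Sigma_p: only ldelta p q e with active e = p is used *)
Record clts : Type := CLTS {
  lstate : P -> Type;
  linit : forall p, lstate p;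
  lfinal : forall p, lstate p -> bool;
  ldelta : forall p, lstate p -> event -> option (lstate p)
}.

Section CLTSsem.
Variables (A : arch) (C : clts).

Definition config := ((forall p, lstate C p) * chstate A)%type.

Definition cinit : config := (linit C, @chi0 A).
Definition cfinal (c : config) : Prop :=
  (forall p, lfinal (c.1 p)) /\ c.2 = @chi0 A.

Definition cstep (c : config) (e : event) (c' : config) : Prop :=
  [/\ ldelta (c.1 (active e)) e = Some (c'.1 (active e)),
      (forall r, r != active e -> c'.1 r = c.1 r) &
      chstep c.2 e = Some c'.2].

Inductive creach : config -> seq event -> config -> Prop :=
| CR0 c : creach c [::] c
| CRS c e c' s c'' : cstep c e c' -> creach c' s c'' -> creach c (e :: s) c''.

Definition clang (w : word event) : Prop :=
  match w with
  | Fin s => exists c, creach cinit s c /\ cfinal c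
  | Inf f => exists cs : nat -> config,
      cs 0 = cinit /\ forall i, cstep (cs i) (f i) (cs i.+1)
  end.

Definition cdeadlock_free : Prop :=
  forall s c, creach cinit s c -> ~ cfinal c -> exists e c', cstep c e c'.
End CLTSsem.

Record glts : Type := GLTS {
  gstate : Type;
  gtrans : gstate -> gletter -> gstate -> Prop;
  ginit : gstate;
  gfinal : gstate -> Prop
}.

Section Global.
Variable G : glts.

Inductive greach : gstate G -> seq gletter -> gstate G -> Prop :=
| GR0 s : greach s [::] s
| GRS s a s' t s'' : gtrans s a s' -> greach s' t s'' -> greach s (a :: t) s''.

Definition sink_final : Prop :=
  forall s : gstate G, gfinal s -> forall a s', ~ gtrans s a s'.

Definition sender_driven : Prop :=
  forall (s : gstate G) a1 s1 a2 s2, gtrans s a1 s1 -> gtrans s a2 s2 ->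
    a1.1.1 = a2.1.1 /\ (a1 = a2 -> s1 = s2).

Definition gdeadlock_free : Prop :=
  forall t (s : gstate G), greach (ginit G) t s -> gfinal s \/ exists a s', gtrans s a s'.

Definition global_protocol : Prop :=
  [/\ sink_final, sender_driven & gdeadlock_free].

Definition glang (w : word gletter) : Prop :=
  match w with
  | Fin t => exists s, greach (ginit G) t s /\ gfinal s
  | Inf f => exists ss : nat -> gstate G,
      ss 0 = ginit G /\ forall i, gtrans (ss i) (f i) (ss i.+1)
  end.

Definition split_lang (w : word event) : Prop :=
  exists g, glang g /\ split g = w.

Definition semL (A : arch) (w : word event) : Prop :=
  (eclosure (fun u => isFin u /\ split_lang u) w /\ inLA A w)
  \/ (~~ isFin w /\
      forall u, prefix_of u w ->
        pref (fun v => eclosure split_lang v /\ inLA A v) u).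

Definition implementable (A : arch) : Prop :=
  exists C : clts, cdeadlock_free A C /\ forall w, clang A C w <-> semL A w.
End Global.
End Protocols.

(* A CLTS implementing S under bag (resp. p2p) implements it unchanged under
   p2p (resp. sb). Counting the pending messages of each value maps p2p channel
   states to bag states, and splitting each sender's queue by receiver maps sb
   states to p2p states; these abstractions preserve channel steps and reflect
   emptiness, so the runs under the finer architecture are exactly the coarser
   runs that are compliant for the finer one. L_A(S) is cut down in the same way
   thanks to a completion property of FIFO architectures whose channels have a
   single writer: a compliant prefix of a shuffle of a split protocol trace is
   continued into a compliant shuffle of that trace by appending the events each
   participant still owes, in protocol order, each one hoisted in front of the
   pending events of the others. The same completion turns a stuck
   configuration of the finer system into an enabled step or a final one,
   so deadlock freedom transfers as well. *)

From HB Require Import structures.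
From Pilot Require Import Defs.
From mathcomp Require Import all_boot.
From Stdlib Require Import FunctionalExtensionality Classical IndefiniteDescription.
Set Implicit Arguments. Unset Strict Implicit. Unset Printing Implicit Defensive.

Lemma catsI (T : Type) (s : seq T) : injective (cat s).
Proof. by elim: s => //= y s IH s1 s2 [/IH]. Qed.

Lemma filter_predC_nil (T : Type) (D : pred T) s : all (predC D) s -> filter D s = [::].
Proof. by elim: s => //= y s IH /andP[/negbTE -> /IH]. Qed.

Lemma filter_eq_cons (T : Type) (D : pred T) r e z : filter D r = e :: z ->
  exists r1 r2, r = r1 ++ e :: r2 /\ all (predC D) r1.
Proof.
elim: r => //= y r IH; case: ifP => Dy; first by case=> <- _; exists [::], r.
by move/IH=> [r1 [r2 [-> r1D]]]; exists (y :: r1), r2; rewrite /= Dy.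
Qed.

Lemma uniform_bound (I : finType) (Q : I -> nat -> Prop) :
  (forall i n m, n <= m -> Q i n -> Q i m) -> (forall i, exists n, Q i n) ->
  exists N, forall i, Q i N.
Proof.
move=> Q_mono Q_ex; suff [N QN] : exists N, forall i, i \in enum I -> Q i N.
  by exists N => i; apply: QN; rewrite mem_enum.
elim: (enum I) => [|i s [N IH]]; first by exists 0.
have [n Qn] := Q_ex i; exists (maxn N n) => j; rewrite inE => /predU1P[->|js].
  exact: Q_mono (leq_maxr _ _) Qn.
exact: Q_mono (leq_maxl _ _) (IH _ js).
Qed.

Section Words.
Variable T : Type.
Implicit Types (w : word T) (s u : seq T).

Definition wtake n w : seq T :=
  match w with Fin s => take n s | Inf f => mkseq f n end.

Definition wdrop n w : word T :=
  match w with Fin s => Fin (drop n s) | Inf f => Inf (fun i => f (n + i)) end.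

Definition wcat s w : word T :=
  match w with
  | Fin s' => Fin (s ++ s')
  | Inf f => Inf (fun i => if i < size s then nth (f 0) s i else f (i - size s))
  end.

Lemma wtake0 w : wtake 0 w = [::].
Proof. by case: w => [s|f] //=; rewrite take0. Qed.

Lemma take_onthS n s : take n.+1 s = take n s ++ seq_of_opt (onth s n).
Proof. by elim: s n => [|a s IH] [|n] //=; rewrite ?take0 ?IH. Qed.

Lemma wtakeS n w : wtake n.+1 w = wtake n w ++ seq_of_opt (wnth w n).
Proof. by case: w => [s|f] /=; [exact: take_onthS | rewrite mkseqS cats1]. Qed.

Lemma mkseqD (f : nat -> T) m n :
  mkseq f (m + n) = mkseq f m ++ mkseq (fun i => f (m + i)) n.
Proof.
by rewrite /mkseq iotaD map_cat add0n -{2}(addn0 m) iotaDl -map_comp.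
Qed.

Lemma wtakeD m n w : wtake (m + n) w = wtake m w ++ wtake n (wdrop m w).
Proof. by case: w => [s|f] /=; [exact: takeD | exact: mkseqD]. Qed.

Lemma onth_nth_Some (x0 : T) s i : i < size s -> onth s i = Some (nth x0 s i).
Proof. by move=> lt_i_s; rewrite onthE (nth_map x0). Qed.

Lemma prefix_of_mkseq (f : nat -> T) n : prefix_of (mkseq f n) (Inf f).
Proof.
move=> i; rewrite size_mkseq => lt_in /=.
by rewrite (onth_nth_Some (f 0)) ?size_mkseq ?nth_mkseq.
Qed.

Lemma wtake_prefix_of u w : prefix_of u w -> wtake (size u) w = u.
Proof.
move=> uw; suff wtake_le n : n <= size u -> wtake n w = take n u.
  by rewrite wtake_le ?take_size.
elim: n => [|n IH] lt_nu; first by rewrite wtake0 take0.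
by rewrite wtakeS take_onthS IH ?(ltnW lt_nu) // uw.
Qed.

Lemma prefix_of_rcons u w a :
  prefix_of u w -> wnth w (size u) = Some a -> prefix_of (rcons u a) w.
Proof.
move=> uw wa i; rewrite size_rcons ltnS -cats1 onth_cat leq_eqVlt.
by case/predU1P => [->|lt_iu]; [rewrite ltnn subnn | rewrite lt_iu uw].
Qed.

Lemma prefix_of_wcat u r w : prefix_of u (wcat (u ++ r) w).
Proof.
move=> i lt_iu; have lt_iur : i < size (u ++ r) by rewrite size_cat ltn_addr.
case: w => [s|f] /=; first by rewrite onth_cat lt_iur onth_cat lt_iu.
by rewrite lt_iur -(onth_nth_Some _ lt_iur) onth_cat lt_iu.
Qed.

Lemma wtake_wcat s n w : wtake (size s + n) (wcat s w) = s ++ wtake n w.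
Proof.
case: w => [s'|f] /=; first by rewrite takeD take_size_cat // drop_size_cat.
rewrite mkseqD; congr (_ ++ _).
  rewrite -[RHS](mkseq_nth (f 0)); apply/eq_in_map => i.
  by rewrite mem_iota add0n => /andP[_ ->].
by apply: eq_mkseq => i /=; rewrite ltnNge leq_addr addKn.
Qed.

Lemma count_wtake (D : pred T) w i :
  count (fun j => oapp D false (wnth w j)) (iota 0 i) = count D (wtake i w).
Proof.
elim: i => [|i IH]; first by rewrite wtake0.
rewrite -addn1 iotaD count_cat IH addn1 wtakeS count_cat /=.
by case: (wnth w i).
Qed.

End Words.

Section Projections.
Variable T : eqType.
Implicit Types (w : word T) (s : seq T) (D : pred T).

Lemma wtake_prefix m n w : m <= n -> prefix (wtake m w) (wtake n w).
Proof. by move=> le_mn; rewrite -(subnKC le_mn) wtakeD prefix_prefix. Qed.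

Lemma prefix_filter D s1 s2 : prefix s1 s2 -> prefix (filter D s1) (filter D s2).
Proof. by move=> /prefixP[s ->]; rewrite filter_cat prefix_prefix. Qed.

Lemma onth_prefix s1 s2 k a : prefix s1 s2 -> onth s1 k = Some a -> onth s2 k = Some a.
Proof.
move=> /prefixP[s ->] s1k; rewrite onth_cat.
by have -> : k < size s1 by rewrite -onthTE s1k.
Qed.

Lemma proj_atP D w k a :
  proj_at D w k a <-> exists n, onth (filter D (wtake n w)) k = Some a.
Proof.
split=> [[i [wi Da cnt]]|[n]].
  exists i.+1; rewrite wtakeS wi filter_cat /= Da onth_cat size_filter.
  by rewrite -count_wtake cnt ltnn subnn.
elim: n => [|n IH]; first by rewrite wtake0 onth0n.
rewrite wtakeS filter_cat onth_cat; case: ifP => [_|le_k]; first exact: IH.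
case wn: (wnth w n) => [b|] /=; last by rewrite onth0n.
case: ifP => Db /=; last by rewrite onth0n.
move/onth1P => [k_eq <-]; exists n; split => //.
rewrite count_wtake -size_filter; apply/eqP; rewrite eqn_leq leqNgt le_k /=.
by rewrite -subn_eq0 k_eq.
Qed.

Lemma proj_at_subP D w w' :
  (forall k a, proj_at D w k a -> proj_at D w' k a) <->
  (forall n, exists n', prefix (filter D (wtake n w)) (filter D (wtake n' w'))).
Proof.
split=> [sub_ww'|pre_ww' k a /proj_atP[n wn]]; last first.
  have [n' pre_n] := pre_ww' n; apply/proj_atP; exists n'; exact: onth_prefix wn.
elim=> [|n [n' IH]]; first by exists 0; rewrite wtake0 prefix0s.
rewrite wtakeS filter_cat.
case wn: (wnth w n) => [b|] /=; last by exists n'; rewrite cats0.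
case: ifP => Db /=; last by exists n'; rewrite cats0.
have /sub_ww' /proj_atP[n'' w'n''] : proj_at D w (size (filter D (wtake n w))) b.
  by apply/proj_atP; exists n.+1; rewrite wtakeS wn filter_cat /= Db onth_cat ltnn subnn.
exists (maxn n' n'').
have /prefixP[z z_def] :=
  prefix_trans IH (prefix_filter D (wtake_prefix w' (leq_maxl n' n''))).
have := onth_prefix (prefix_filter D (wtake_prefix w' (leq_maxr n' n''))) w'n''.
rewrite z_def onth_cat ltnn subnn.
by case: z {z_def} => // y z /= [->]; rewrite cats1 -cat_rcons prefix_prefix.
Qed.

Lemma same_projP D w w' :
  same_proj D w w' <->
  (forall n, exists n', prefix (filter D (wtake n w)) (filter D (wtake n' w'))) /\
  (forall n, exists n', prefix (filter D (wtake n w')) (filter D (wtake n' w))).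
Proof.
split=> [eq_ww' | [/proj_at_subP sub /proj_at_subP sup] k a].
  by split; apply/proj_at_subP => k a /eq_ww'.
by split; [exact: sub | exact: sup].
Qed.

Lemma same_proj_wcat D w n s :
  filter D s = filter D (wtake n w) -> same_proj D w (wcat s (wdrop n w)).
Proof.
move=> proj_s; apply/same_projP; split=> k.
  exists (size s + k); rewrite wtake_wcat.
  apply: prefix_trans (prefix_filter _ (wtake_prefix _ (leq_addl n k))) _.
  by rewrite wtakeD !filter_cat proj_s prefix_refl.
exists (n + k).
apply: prefix_trans (prefix_filter _ (wtake_prefix _ (leq_addl (size s) k))) _.
by rewrite wtake_wcat wtakeD !filter_cat proj_s prefix_refl.
Qed.

End Projections.

Section Events.
Variables (P : finType) (V : eqType).
Local Notation event := (event P V).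
Local Notation gletter := (gletter P V).

Definition emsg (e : event) : gletter :=
  match e with Snd p q m | Rcv p q m => (p, q, m) end.
Definition is_snd (e : event) : bool := if e is Snd _ _ _ then true else false.
Definition event_code (e : event) : bool * gletter := (is_snd e, emsg e).
Definition event_decode (c : bool * gletter) : event :=
  let: (b, (p, q, m)) := c in if b then Snd p q m else Rcv p q m.

Lemma event_codeK : cancel event_code event_decode.
Proof. by case. Qed.

HB.instance Definition _ := Equality.copy event (can_type event_codeK).

Definition split_seq (t : seq gletter) : seq event :=
  flatten (map (fun g => [:: snd_of g; rcv_of g]) t).

Lemma split_seq_cat t1 t2 : split_seq (t1 ++ t2) = split_seq t1 ++ split_seq t2.
Proof. by rewrite /split_seq map_cat flatten_cat. Qed.

Lemma isFin_split (g : word gletter) : isFin (Defs.split g) = isFin g.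
Proof. by case: g. Qed.

Lemma wtake_split n (g : word gletter) : wtake n.*2 (Defs.split g) = split_seq (wtake n g).
Proof.
case: g => [s|f] /=; first by elim: s n => [|a s IH] [|n] //=; rewrite IH.
elim: n => [|n IH] //.
rewrite doubleS -addn2 mkseqD IH (mkseqS f n) -cats1 split_seq_cat; congr (_ ++ _).
by rewrite /mkseq /= !addn0 odd_double doubleK addn1 /= odd_double /= uphalf_double.
Qed.

End Events.

Section ChannelRuns.
Variables (P : finType) (V : eqType) (A : arch P V).
Local Notation event := (event P V).
Implicit Types (chi : chstate A) (s : seq event).

Definition run_from chi s : option (chstate A) :=
  foldl (fun o e => obind (fun chi => chstep chi e) o) (Some chi) s.

Lemma run_chE s : run_ch A s = run_from (@chi0 _ _ A) s.
Proof. by []. Qed.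

Lemma foldl_obind_None s :
  foldl (fun o e => obind (fun chi => chstep chi e) o) (None : option (chstate A)) s = None.
Proof. by elim: s. Qed.

Lemma run_from_cat chi s1 s2 :
  run_from chi (s1 ++ s2) = obind (run_from^~ s2) (run_from chi s1).
Proof.
by rewrite /run_from foldl_cat; case: (foldl _ _ s1) => //=; apply: foldl_obind_None.
Qed.

Lemma run_from_cons chi e s :
  run_from chi (e :: s) = obind (run_from^~ s) (chstep chi e).
Proof. exact: (run_from_cat chi [:: e]). Qed.

Lemma run_from_rcons chi s e :
  run_from chi (rcons s e) = obind (fun chi => chstep chi e) (run_from chi s).
Proof. by rewrite /run_from foldl_rcons. Qed.

Lemma run_from_prefix chi s1 s2 :
  prefix s1 s2 -> isSome (run_from chi s2) -> isSome (run_from chi s1).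
Proof. by move=> /prefixP[s ->]; rewrite run_from_cat; case: run_from. Qed.

Lemma inLA_prefix u v : prefix_of u v -> inLA A v -> isSome (run_ch A u).
Proof.
move/wtake_prefix_of; case: v => [s|f] /= <-; last exact.
by apply: run_from_prefix; rewrite prefix_take.
Qed.

Lemma inLA_wtakeP w : inLA A w <-> forall n, isSome (run_ch A (wtake n w)).
Proof.
case: w => [s|f] /=; split=> // [run_s n|run_w].
  by apply: run_from_prefix run_s; rewrite prefix_take.
by move: (run_w (size s)); rewrite take_size.
Qed.

Lemma inLA_wcat s w : run_ch A s = Some (@chi0 _ _ A) -> inLA A w -> inLA A (wcat s w).
Proof.
move=> run_s /inLA_wtakeP run_w; apply/inLA_wtakeP => n.
apply: run_from_prefix (wtake_prefix _ (leq_addl (size s) n)) _.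
by rewrite wtake_wcat run_from_cat -run_chE run_s; apply: run_w.
Qed.

Lemma inLA_wdrop n w :
  run_ch A (wtake n w) = Some (@chi0 _ _ A) -> inLA A w -> inLA A (wdrop n w).
Proof.
move=> run_n /inLA_wtakeP run_w; apply/inLA_wtakeP => k.
by have := run_w (n + k); rewrite wtakeD run_chE run_from_cat -run_chE run_n.
Qed.

Definition echan (e : event) : chan A := xi A (emsg e).1.1 (emsg e).1.2.
Definition eop (e : event) := if is_snd e then @ins _ _ A else @rmv _ _ A.

Lemma chstepE chi e : chstep chi e = omap (upd chi (echan e)) (eop e (emsg e) (chi (echan e))).
Proof. by case: e. Qed.

Lemma chstep_upd chi e chi' : chstep chi e = Some chi' -> exists b, chi' = upd chi (echan e) b.
Proof. by rewrite chstepE; case: eop => //= b [<-]; exists b. Qed.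

Lemma updE chi c b c' : upd chi c b c' = if c' == c then b else chi c'.
Proof. by []. Qed.

Lemma upd_upd chi c b1 b2 : upd (upd chi c b1) c b2 = upd chi c b2.
Proof. by apply: functional_extensionality => c'; rewrite /upd; case: eqP. Qed.

Lemma upd_comm chi c1 c2 b1 b2 : c1 != c2 ->
  upd (upd chi c1 b1) c2 b2 = upd (upd chi c2 b2) c1 b1.
Proof.
move=> c12; apply: functional_extensionality => c; rewrite /upd.
by case: (eqVneq c c1) => [->|//]; rewrite (negbTE c12).
Qed.

Lemma upd_id chi c : upd chi c (chi c) = chi.
Proof. by apply: functional_extensionality => c'; rewrite /upd; case: eqP => [->|]. Qed.

Lemma chstep_upd_other chi c b e : echan e != c ->
  chstep (upd chi c b) e = omap (fun chi => upd chi c b) (chstep chi e).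
Proof.
move=> ec; rewrite !chstepE updE (negbTE ec).
by case: eop => //= b'; rewrite upd_comm // eq_sym.
Qed.

End ChannelRuns.

Definition shuffle_completable (P : finType) (V : eqType) (A : arch P V) : Prop :=
  forall (g : word (gletter P V)) (v : word (event P V)) (u : seq (event P V)),
  sequiv (Defs.split g) v -> prefix_of u v -> isSome (run_ch A u) ->
  exists2 v', sequiv (Defs.split g) v' &
    [/\ prefix_of u v', inLA A v' & isFin v' = isFin g].

Section FifoCompletion.
Variables (P : finType) (V : eqType) (C : eqType) (x : P -> P -> C).
(* Each channel has a single writer, as in p2p and sb but not in bag. *)
Hypothesis xi_sender : forall p q p' q', x p' q' = x p q -> p' = p.
Local Notation event := (event P V).
Local Notation gletter := (gletter P V).

Definition fifo_arch : arch P V :=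
  @Arch P V C x (seq gletter) [::] (@fifo_ins P V) (@fifo_rmv P V).
Local Notation chi0 := (@chi0 _ _ fifo_arch).
Implicit Types (c d : chstate fifo_arch) (r : seq event).

Lemma run_split_seq t : run_from chi0 (split_seq t) = Some chi0.
Proof.
elim: t => // g t IH; rewrite /split_seq /= -/(split_seq t).
rewrite run_from_cons /= run_from_cons /= updE eqxx /= eqxx /= upd_upd.
by rewrite -[[::]]/(chi0 (x g.1.1 g.1.2)) upd_id.
Qed.

Lemma inLA_split g : inLA fifo_arch (Defs.split g).
Proof.
apply/inLA_wtakeP => n; rewrite run_chE.
apply: run_from_prefix (wtake_prefix _ (_ : n <= n.*2)) _; first by rewrite -addnn leq_addr.
by rewrite wtake_split run_split_seq.
Qed.

Lemma run_from_enqueue p q m r c d :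
  all (predC (Sigma_p p)) r -> run_from c r = Some d ->
  run_from (upd c (x p q) (rcons (c (x p q)) (p, q, m))) r =
    Some (upd d (x p q) (rcons (d (x p q)) (p, q, m))).
Proof.
elim: r c => [|y r IH] c /=; first by move=> _ [<-].
case/andP=> ny nr; rewrite !run_from_cons.
case cy: (chstep c y) => [c'|//] /= run_r.
case: (eqVneq (echan fifo_arch y) (x p q)) => [chan_y|other]; last first.
  have [b c'_def] := chstep_upd cy.
  rewrite chstep_upd_other // cy /=.
  have -> : c (x p q) = c' (x p q) by rewrite c'_def updE eq_sym (negbTE other).
  exact: IH.
move: ny cy chan_y run_r; case: y => p' q' m' /= ny cy chan_y run_r.
  by move: ny; rewrite /Sigma_p /= (xi_sender chan_y) eqxx.
move: cy; rewrite chan_y; case: (c (x p q)) => [|z b] //=.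
case: eqP => // z_def [c'_def].
rewrite updE eqxx /= z_def eqxx /= upd_upd.
by have := IH _ nr run_r; rewrite -c'_def updE eqxx upd_upd.
Qed.

Lemma run_from_dequeue p q m r c d b :
  all (predC (Sigma_p q)) r -> c (x p q) = (p, q, m) :: b -> run_from c r = Some d ->
  exists b', d (x p q) = (p, q, m) :: b' /\
    run_from (upd c (x p q) b) r = Some (upd d (x p q) b').
Proof.
elim: r c b => [|y r IH] c b /=; first by move=> _ cpq [<-]; exists b.
case/andP=> ny nr cpq; rewrite !run_from_cons.
case cy: (chstep c y) => [c'|//] /= run_r.
case: (eqVneq (echan fifo_arch y) (x p q)) => [chan_y|other]; last first.
  have [b0 c'_def] := chstep_upd cy.
  rewrite chstep_upd_other // cy /=.
  apply: IH => //; by rewrite c'_def updE eq_sym (negbTE other).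
move: ny cy chan_y run_r; case: y => p' q' m' /= ny cy chan_y run_r.
  move: cy; rewrite chan_y cpq /= => -[c'_def].
  rewrite updE eqxx upd_upd.
  have c'pq : c' (x p q) = (p, q, m) :: rcons b (p', q', m') by rewrite -c'_def updE eqxx.
  by have := IH _ _ nr c'pq run_r; rewrite -c'_def upd_upd.
move: cy; rewrite chan_y cpq /=; case: eqP => // [[_ q_eq _]].
by move: ny; rewrite /Sigma_p /= q_eq eqxx.
Qed.

(* Others only dequeue from the channel a send of [e] appends to, and cannot
   consume the message a receive of [e] takes. *)
Lemma run_from_hoist e r c d ce de :
  all (predC (Sigma_p (active e))) r ->
  chstep c e = Some ce -> run_from c r = Some d -> chstep d e = Some de ->
  run_from ce r = Some de.
Proof.
case: e => p q m /= r_other.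
  by move=> [<-] run_r [<-]; apply: run_from_enqueue.
case cpq: (c (x p q)) => [|z b] //=; case: eqP => // z_def [<-] run_r.
rewrite z_def in cpq; have [b' [-> ->]] := run_from_dequeue r_other cpq run_r.
by rewrite /= eqxx => -[<-].
Qed.

Lemma fifo_complete t u : isSome (run_from chi0 u) ->
  (forall p, prefix (filter (Sigma_p p) u) (filter (Sigma_p p) (split_seq t))) ->
  exists r, run_from chi0 (u ++ r) = Some chi0 /\
    forall p, filter (Sigma_p p) (u ++ r) = filter (Sigma_p p) (split_seq t).
Proof.
elim/last_ind: u => [|u e IH].
  by move=> _ _; exists (split_seq t); split => //; apply: run_split_seq.
rewrite run_from_rcons; case run_u: (run_from chi0 u) => [c|//] /=.
case ce_def: (chstep c e) => [ce|//] _ pre_ue.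
have pre_u p : prefix (filter (Sigma_p p) u) (filter (Sigma_p p) (split_seq t)).
  exact: prefix_trans (prefix_filter _ (prefix_rcons u e)) (pre_ue p).
have /IH/(_ pre_u)[r [run_ur proj_ur]] : isSome (run_from chi0 u) by rewrite run_u.
(* In the completion [r] of [u], the first event of [active e] is [e]: hoist it. *)
have /prefixP[z] := pre_ue (active e).
have e_act : Sigma_p (active e) e := eqxx (active e).
rewrite -proj_ur filter_rcons e_act filter_cat cat_rcons.
move=> /catsI r_proj; have [r1 [r2 [r_def r1_other]]] := filter_eq_cons r_proj.
exists (r1 ++ r2); split.
  rewrite run_from_cat run_from_rcons run_u /= ce_def /= run_from_cat.
  move: run_ur; rewrite r_def run_from_cat run_u /= run_from_cat.
  case run_r1: (run_from c r1) => [d|//] /=; rewrite run_from_cons.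
  case de_def: (chstep d e) => [de|//] /=.
  by rewrite (run_from_hoist r1_other ce_def run_r1 de_def).
move=> p; rewrite -proj_ur r_def cat_rcons !filter_cat /= filter_cat /=.
by case: ifP => // /eqP <-; rewrite (filter_predC_nil r1_other).
Qed.

Lemma fifo_completable : shuffle_completable fifo_arch.
Proof.
move=> g v u equiv_v pre_uv run_u.
have [N pre_N] : exists N, forall p,
    prefix (filter (Sigma_p p) u) (filter (Sigma_p p) (split_seq (wtake N g))).
  apply: uniform_bound => [p n m le_nm pre_n|p].
    apply: prefix_trans pre_n _; apply/prefix_filter.
    by rewrite -!wtake_split; apply: wtake_prefix; rewrite leq_double.
  have [_ /(_ (size u))[n pre_n]] := proj1 (same_projP _ _ _) (equiv_v p).
  exists n; rewrite -(wtake_prefix_of pre_uv) -wtake_split.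
  apply: prefix_trans pre_n _; apply/prefix_filter/wtake_prefix.
  by rewrite -addnn leq_addr.
have [r [run_ur proj_ur]] := fifo_complete run_u pre_N.
exists (wcat (u ++ r) (wdrop N.*2 (Defs.split g))).
  by move=> p; apply: same_proj_wcat; rewrite proj_ur wtake_split.
split; [exact: prefix_of_wcat | | by case: (g)].
apply: inLA_wcat run_ur (inLA_wdrop _ (inLA_split g)).
by rewrite run_chE wtake_split run_split_seq.
Qed.

End FifoCompletion.

Section CLTSRuns.
Variables (P : finType) (V : eqType) (A : arch P V) (C : clts P V).
Local Notation config := (config A C).
Implicit Types (c d : config) (s t : seq (event P V)).

Lemma creach_nil c c' : creach c [::] c' -> c = c'.
Proof. by move=> H; inversion H. Qed.

Lemma creach_cons c c'' e s :
  creach c (e :: s) c'' -> exists c', cstep c e c' /\ creach c' s c''.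
Proof. by move=> H; inversion H; subst; eauto. Qed.

Lemma creach_cat c c'' s t :
  creach c (s ++ t) c'' <-> exists c', creach c s c' /\ creach c' t c''.
Proof.
elim: s c => [|e s IH] c /=.
  by split=> [|[c' [/creach_nil -> //]]]; exists c; split=> //; constructor.
split=> [/creach_cons[c1 [step /IH[c' [reach1 reach']]]]|].
  by exists c'; split=> //; apply: CRS step reach1.
move=> [c' [/creach_cons[c1 [step reach1]] reach']].
by apply: CRS step _; apply/IH; exists c'.
Qed.

Lemma creach_rcons c c' c'' s e :
  creach c s c' -> cstep c' e c'' -> creach c (rcons s e) c''.
Proof.
move=> reach step; rewrite -cats1; apply/creach_cat; exists c'; split=> //.
by apply: CRS step _; constructor.
Qed.

Lemma cstep_det c c1 c2 e : cstep c e c1 -> cstep c e c2 -> c1 = c2.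
Proof.
case: c1 c2 => [l1 ch1] [l2 ch2] [/= loc1 other1 ch_1] [/= loc2 other2 ch_2].
have -> : ch1 = ch2 by move: ch_1; rewrite ch_2 => -[].
congr (_, _); apply: functional_extensionality_dep => r.
case: (eqVneq r (active e)) => [->|r_e]; first by move: loc1; rewrite loc2 => -[].
by rewrite other1 ?other2.
Qed.

Lemma creach_det c c1 c2 s : creach c s c1 -> creach c s c2 -> c1 = c2.
Proof.
move=> reach; elim: reach c2 => [c' c2 /creach_nil //|c' e c1' s' c'' step _ IH c2].
by case/creach_cons=> c1'' [step']; rewrite -(cstep_det step step'); apply: IH.
Qed.

Lemma creach_run c c' s : creach c s c' -> run_from c.2 s = Some c'.2.
Proof. by elim=> [//|c0 e c1 s' c'' [_ _ step] _ IH]; rewrite run_from_cons step. Qed.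

Lemma clang_prefix_creach w u :
  clang A C w -> prefix_of u w -> exists c, creach (cinit A C) u c.
Proof.
move=> lang_w /wtake_prefix_of.
case: w lang_w => [s [c [reach _]]|f [cs [cs0 run_cs]]] /= u_def.
  move: reach; rewrite -(cat_take_drop (size u) s) u_def => /creach_cat[c' [reach _]].
  by exists c'.
move: (size u) u_def => n <-; exists (cs n).
elim: n => [|n IH]; first by rewrite cs0; constructor.
by rewrite mkseqS; apply: creach_rcons IH (run_cs n).
Qed.

Lemma creach_path c0 c s : creach c0 s c ->
  exists cs : nat -> config, [/\ cs 0 = c0, cs (size s) = c &
     forall i e, onth s i = Some e -> cstep (cs i) e (cs i.+1)].
Proof.
elim=> [c1|c1 e c1' s' c'' step _ [cs [cs0 cs_end path]]].
  by exists (fun _ => c1); split=> // i e; rewrite onth0n.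
exists (fun i => if i is i'.+1 then cs i' else c1); split=> //= -[|i] e' /=.
  by move=> [<-]; rewrite cs0.
exact: path.
Qed.

Lemma creach_forever c :
  (forall s d, creach c s d -> exists e d', cstep d e d') ->
  exists (f : nat -> event P V) (cs : nat -> config),
    cs 0 = c /\ forall i, cstep (cs i) (f i) (cs i.+1).
Proof.
move=> live; pose R := {d | exists s, creach c s d}.
have next (d : R) : {y : event P V * R | cstep (sval d) y.1 (sval y.2)}.
  apply: constructive_indefinite_description.
  case: d => d [s reach] /=; have [e [d' step]] := live _ _ reach.
  by exists (e, exist _ d' (ex_intro _ (rcons s e) (creach_rcons reach step))).
have reach_c : exists s, creach c s c by exists [::]; constructor.
pose ds n := iter n (fun y => (sval (next y)).2) (exist _ c reach_c).
exists (fun n => (sval (next (ds n))).1), (fun n => sval (ds n)); split=> // i.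
exact: svalP (next (ds i)).
Qed.

Lemma deadlock_free_prefix_clang s c : cdeadlock_free A C ->
  creach (cinit A C) s c -> exists2 w, clang A C w & prefix_of s w.
Proof.
move=> df reach.
case: (classic (exists t c', creach c t c' /\ cfinal c')) => [[t [c' [reach' fin]]]|no_fin].
  exists (Fin (s ++ t)); first by exists c'; split=> //; apply/creach_cat; exists c.
  by move=> i lt_is /=; rewrite onth_cat lt_is.
have /creach_forever[f [cs [cs0 run_cs]]] :
    forall t d, creach c t d -> exists e d', cstep d e d'.
  move=> t d reach'; apply: (df (s ++ t)); first by apply/creach_cat; exists c.
  by move=> fin; apply: no_fin; exists t, d.
have [cs' [cs'0 cs's path]] := creach_path reach.
exists (wcat s (Inf f)); last by have := @prefix_of_wcat _ s [::] (Inf f); rewrite cats0.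
exists (fun i => if i < size s then cs' i else cs (i - size s)); split.
  case: ifP => // /negbT; rewrite -leqNgt leqn0 => /eqP s0.
  by rewrite s0 cs0 -cs's s0.
move=> i; case: ifP => lt_is.
  have step := path i _ (onth_nth_Some (f 0) lt_is).
  case: ifP => lt_Sis; first exact: step.
  have Si : i.+1 = size s by apply/eqP; rewrite eqn_leq lt_is leqNgt lt_Sis.
  by rewrite Si subnn cs0 -cs's -Si.
have le_si : size s <= i by rewrite leqNgt lt_is.
by rewrite ltnNge (leqW le_si) /= subSn.
Qed.

End CLTSRuns.

Lemma semL_of_shuffle (P : finType) (V : eqType) (G : glts P V) (A : arch P V) g v :
  glang G g -> sequiv (Defs.split g) v -> inLA A v -> isFin v = isFin g -> semL G A v.
Proof.
case: v => [s|f] g_lang equiv_v v_A fin_v.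
  left; split=> //; exists (Defs.split g); split=> //.
  by split; [rewrite isFin_split -fin_v | exists g].
right; split=> // u pre_u; exists (Inf f); split=> //; split=> //.
by exists (Defs.split g); split=> //; exists g.
Qed.

Lemma semL_pref (P : finType) (V : eqType) (G : glts P V) (A : arch P V) w u :
  semL G A w -> prefix_of u w ->
  pref (fun v => eclosure (split_lang G) v /\ inLA A v) u.
Proof.
case=> [[[w' [[_ w'_split] equiv_w]] w_A] pre_uw|[_ pref_w]]; last exact: pref_w.
by exists w; split=> //; split=> //; exists w'.
Qed.

Section Simulation.
Variables (P : finType) (V : eqType) (A1 A2 : arch P V).
Variables (F : chstate A2 -> chstate A1) (inv : chstate A2 -> Prop).
Local Notation chi01 := (@chi0 _ _ A1).
Local Notation chi02 := (@chi0 _ _ A2).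
Hypothesis inv_chi0 : inv chi02.
Hypothesis F_chi0 : F chi02 = chi01.
Hypothesis F_step : forall c e c', inv c -> chstep c e = Some c' ->
  inv c' /\ chstep (F c) e = Some (F c').
Hypothesis F_empty : forall c, inv c -> F c = chi01 -> c = chi02.
Hypothesis A2_completable : shuffle_completable A2.

Lemma run_from_sim s c c' : inv c -> run_from c s = Some c' ->
  inv c' /\ run_from (F c) s = Some (F c').
Proof.
elim: s c => [|e s IH] c inv_c /=; first by case=> <-.
rewrite !run_from_cons; case step: (chstep c e) => [c1|//] /=.
by have [inv_c1 ->] := F_step inv_c step; apply: IH.
Qed.

Lemma run_ch_sim s c : run_ch A2 s = Some c -> inv c /\ run_ch A1 s = Some (F c).
Proof. by rewrite !run_chE -F_chi0; apply: run_from_sim. Qed.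

Lemma inLA_sim w : inLA A2 w -> inLA A1 w.
Proof.
have run_sim s : isSome (run_ch A2 s) -> isSome (run_ch A1 s).
  by case run2: (run_ch A2 s) => [c|//] _; rewrite (proj2 (run_ch_sim run2)).
by case: w => [s|f] /=; [apply: run_sim | move=> run_f n; apply: run_sim].
Qed.

Variable G : glts P V.

Section FixedCLTS.
Variable C : clts P V.

Lemma creach_sim (c c' : config A2 C) s : creach c s c' -> inv c.2 ->
  creach (c.1, F c.2) s (c'.1, F c'.2) /\ inv c'.2.
Proof.
elim=> [c0 inv_c0|c0 e c1 s' c'' [loc other step] _ IH inv_c0].
  by split=> //; constructor.
have [inv_c1 stepF] := F_step inv_c0 step.
have [reach inv_c''] := IH inv_c1; split=> //.
by apply: CRS reach; split.
Qed.

Lemma creach_lift (c c' : config A1 C) s c2 : creach c s c' -> inv c2 -> c.2 = F c2 ->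
  isSome (run_from c2 s) ->
  exists2 c2', creach (c.1, c2) s (c'.1, c2') & c'.2 = F c2' /\ inv c2'.
Proof.
move=> reach; elim: reach c2 => [c0 c2 inv_c2 c0_F _|].
  by exists c2; last split; first constructor.
move=> c0 e c1 s' c'' [loc other step] _ IH c2 inv_c2 c0_F.
rewrite run_from_cons; case step2: (chstep c2 e) => [c2m|//] /= run2.
have [inv_m F_m] := F_step inv_c2 step2.
have c1_F : c1.2 = F c2m by move: step; rewrite c0_F F_m => -[].
have [c2' reach' F_c2'] := IH _ inv_m c1_F run2.
by exists c2' => //; apply: CRS reach'; split.
Qed.

Lemma clang_sim_Fin s : clang A2 C (Fin s) <-> clang A1 C (Fin s) /\ inLA A2 (Fin s).
Proof.
split=> [[c [reach [fin ch0]]]|[[c [reach [fin ch0]]] run2]].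
  have [reach1 _] := creach_sim reach inv_chi0.
  split; last by rewrite /= run_chE (creach_run reach).
  exists (c.1, F c.2); split; first by rewrite /= F_chi0 in reach1.
  by split=> //=; rewrite ch0 F_chi0.
have [c2 reach2 [F_c2 inv_c2]] := creach_lift reach inv_chi0 (esym F_chi0) run2.
exists (c.1, c2); split=> //; split=> //=.
by apply: F_empty; rewrite // -F_c2.
Qed.

Lemma clang_sim_Inf f : clang A2 C (Inf f) <-> clang A1 C (Inf f) /\ inLA A2 (Inf f).
Proof.
split=> [[cs [cs0 run_cs]]|[[cs [cs0 run_cs]] run2]].
  have inv_cs i : inv (cs i).2.
    by elim: i => [|i IH]; [rewrite cs0 | case: (run_cs i) => _ _ /(F_step IH)[]].
  split.
    exists (fun i => ((cs i).1, F (cs i).2)); split; first by rewrite cs0 /= F_chi0.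
    move=> i; case: (run_cs i) => loc other step; split=> //=.
    by case: (F_step (inv_cs i) step).
  move=> n; suff -> : run_ch A2 (mkseq f n) = Some (cs n).2 by [].
  elim: n => [|n IH]; first by rewrite cs0.
  by rewrite run_chE mkseqS run_from_rcons -run_chE IH /=; case: (run_cs n).
pose c2 n := odflt chi02 (run_ch A2 (mkseq f n)).
have run_c2 n : run_ch A2 (mkseq f n) = Some (c2 n).
  by move: (run2 n); rewrite /c2; case: run_ch.
have step_c2 n : chstep (c2 n) (f n) = Some (c2 n.+1).
  by have := run_c2 n.+1; rewrite run_chE mkseqS run_from_rcons -run_chE run_c2.
have F_c2 n : (cs n).2 = F (c2 n) /\ inv (c2 n).
  elim: n => [|n [IH inv_n]]; first by rewrite cs0 F_chi0.
  have [inv_Sn F_step_n] := F_step inv_n (step_c2 n).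
  by split=> //; case: (run_cs n) => _ _; rewrite IH F_step_n => -[].
exists (fun n => ((cs n).1, c2 n)); split; first by rewrite cs0.
by move=> n; case: (run_cs n) => loc other _; split=> //; apply: step_c2.
Qed.

Lemma clang_sim w : clang A2 C w <-> clang A1 C w /\ inLA A2 w.
Proof. by case: w => [s|f]; [exact: clang_sim_Fin | exact: clang_sim_Inf]. Qed.

Lemma semL_sim w : semL G A2 w <-> semL G A1 w /\ inLA A2 w.
Proof.
split=> [[[cl w_A2]|[inf pref_w]]|[[[cl _]|[inf pref_w]] w_A2]].
- by split=> //; left; split=> //; apply: inLA_sim.
- split.
    right; split=> // u /pref_w[v [[cl v_A2] pre_uv]].
    by exists v; split=> //; split=> //; apply: inLA_sim.
  case: w inf pref_w => [//|f] _ pref_w n.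
  have [v [[_ v_A2] pre_v]] := pref_w _ (@prefix_of_mkseq _ f n).
  exact: inLA_prefix pre_v v_A2.
- by left.
right; split=> // u pre_u.
have [v [[[_ [[g [g_lang <-]] equiv_v]] _] pre_uv]] := pref_w u pre_u.
have [v' equiv_v' [pre_uv' v'_A2 _]] := A2_completable equiv_v pre_uv (inLA_prefix pre_u w_A2).
exists v'; split=> //; split=> //.
by exists (Defs.split g); split=> //; exists g.
Qed.

Lemma deadlock_free_sim : cdeadlock_free A1 C ->
  (forall w, clang A1 C w <-> semL G A1 w) -> cdeadlock_free A2 C.
Proof.
move=> df1 lang1 s c reach2 nfin2.
have [reach1 inv_c] := creach_sim reach2 inv_chi0; rewrite /= F_chi0 in reach1.
have nfin1 : ~ cfinal (c.1, F c.2).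
  by move=> [fin /= /(F_empty inv_c) empty]; apply: nfin2.
have [w w_lang pre_sw] := deadlock_free_prefix_clang df1 reach1.
have [v [[[_ [[g [g_lang <-]] equiv_v]] _] pre_sv]] :=
  semL_pref (proj1 (lang1 w) w_lang) pre_sw.
have run2 : run_ch A2 s = Some c.2 by rewrite run_chE (creach_run reach2).
have /(A2_completable equiv_v pre_sv)[v' equiv_v' [pre_sv' v'_A2 fin_v']] :
  isSome (run_ch A2 s) by rewrite run2.
have v'_lang : clang A1 C v'.
  by apply/lang1; apply: semL_of_shuffle g_lang equiv_v' (inLA_sim v'_A2) fin_v'.
case v'_s: (wnth v' (size s)) => [e|].
  have pre_se := prefix_of_rcons pre_sv' v'_s.
  have [c' reach'] := clang_prefix_creach v'_lang pre_se.
  move: reach'; rewrite -cats1 => /creach_cat[c'' [reach'' /creach_cons[c3 [step _]]]].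
  rewrite -(creach_det reach1 reach'') in step.
  have := inLA_prefix pre_se v'_A2; rewrite run_chE run_from_rcons -run_chE run2 /=.
  case step2: (chstep c.2 e) => [c2'|//] _.
  by exists e, (c3.1, c2'); case: step.
case: v' v'_s pre_sv' v'_lang {equiv_v' v'_A2 fin_v'} => [s'|f] //= v'_s pre_sv' v'_lang.
have s'_def : s' = s.
  by rewrite -(wtake_prefix_of pre_sv') /= take_oversize // -onthNE v'_s.
move: v'_lang; rewrite s'_def => -[c' [reach' fin']].
by case: nfin1; rewrite (creach_det reach1 reach').
Qed.

End FixedCLTS.

Lemma implementable_sim : implementable G A1 -> implementable G A2.
Proof.
move=> [C' [df1 lang1]]; exists C'; split; first exact: deadlock_free_sim.
by move=> w; rewrite clang_sim semL_sim; split=> -[/lang1 w_lang w_A2].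
Qed.

End Simulation.

Section Refinements.
Variables (P : finType) (V : eqType).
Local Notation gletter := (gletter P V).

Definition bag_of_p2p (c : chstate (p2p P V)) : chstate (bag P V) :=
  fun _ mu => count_mem mu (c (mu.1.1, mu.1.2)).

Definition p2p_addressed (c : chstate (p2p P V)) : Prop :=
  forall pq (mu : gletter), mu \in c pq -> (mu.1.1, mu.1.2) = pq.

Lemma bag_of_p2p_step c e c' : p2p_addressed c -> chstep c e = Some c' ->
  p2p_addressed c' /\ chstep (bag_of_p2p c) e = Some (bag_of_p2p c').
Proof.
move=> addr; case: e => p q m /=.
  move=> [<-]; split.
    move=> pq mu; rewrite updE; case: eqP => [->|_]; last exact: addr.
    by rewrite mem_rcons inE => /predU1P[->|/addr].
  congr Some; apply: functional_extensionality => -[]; apply: functional_extensionality => mu.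
  rewrite /bag_of_p2p !updE /=.
  case: ((mu.1.1, mu.1.2) =P (p, q)) => [->|mu_pq].
    by rewrite -cats1 count_cat /= addn0 [_ == mu]eq_sym.
  by case: eqP => [mu_def|_]; [case: mu_pq; rewrite mu_def | rewrite addn0].
case cpq: (c (p, q)) => [|z b] //=; case: eqP => // z_def [<-]; split.
  move=> pq mu; rewrite updE; case: eqP => [->|_]; last exact: addr.
  by move=> mu_b; apply: addr; rewrite cpq inE mu_b orbT.
rewrite /bag_rmv.
have -> : bag_of_p2p c tt (p, q, m) = (count_mem (p, q, m) b).+1.
  by rewrite /bag_of_p2p /= cpq /= z_def eqxx.
congr Some; apply: functional_extensionality => -[]; apply: functional_extensionality => mu.
rewrite /bag_of_p2p !updE /=.
case: ((mu.1.1, mu.1.2) =P (p, q)) => [->|mu_pq].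
  by rewrite cpq z_def /= [_ == mu]eq_sym; case: (mu == _); rewrite ?subn0 ?add1n ?subn1.
by case: eqP => [mu_def|_]; [case: mu_pq; rewrite mu_def | rewrite subn0].
Qed.

Lemma bag_of_p2p_empty c : p2p_addressed c ->
  bag_of_p2p c = @chi0 _ _ (bag P V) -> c = @chi0 _ _ (p2p P V).
Proof.
move=> addr empty; apply: functional_extensionality => pq.
case cpq: (c pq) => [|mu b] //.
have mu_pq : (mu.1.1, mu.1.2) = pq by apply: addr; rewrite cpq mem_head.
by have := congr1 (fun h => h tt mu) empty; rewrite /bag_of_p2p mu_pq cpq /= eqxx.
Qed.

Definition p2p_of_sb (c : chstate (sb P V)) : chstate (p2p P V) :=
  fun pq => filter (fun mu : gletter => mu.1.2 == pq.2) (c pq.1).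

Definition sb_addressed (c : chstate (sb P V)) : Prop :=
  forall p (mu : gletter), mu \in c p -> mu.1.1 = p.

Lemma p2p_of_sb_step c e c' : sb_addressed c -> chstep c e = Some c' ->
  sb_addressed c' /\ chstep (p2p_of_sb c) e = Some (p2p_of_sb c').
Proof.
move=> addr; case: e => p q m /=.
  move=> [<-]; split.
    move=> p' mu; rewrite updE; case: eqP => [->|_]; last exact: addr.
    by rewrite mem_rcons inE => /predU1P[->|/addr].
  congr Some; apply: functional_extensionality => -[p' q'].
  rewrite /p2p_of_sb !updE /= xpair_eqE.
  case: (p' =P p) => [->|_] //=.
  by rewrite filter_rcons /= [q == q']eq_sym; case: eqP => [->|].
case cp: (c p) => [|z b] //=; case: eqP => // z_def [<-]; split.
  move=> p' mu; rewrite updE; case: eqP => [->|_]; last exact: addr.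
  by move=> mu_b; apply: addr; rewrite cp inE mu_b orbT.
rewrite /p2p_of_sb /= cp /= z_def /= eqxx /= eqxx /=.
congr Some; apply: functional_extensionality => -[p' q'].
rewrite !updE /= xpair_eqE.
case: (p' =P p) => [->|_] //=.
by case: eqP => [->|/eqP q'q] //; rewrite cp z_def /= eq_sym (negbTE q'q).
Qed.

Lemma p2p_of_sb_empty c : p2p_of_sb c = @chi0 _ _ (p2p P V) -> c = @chi0 _ _ (sb P V).
Proof.
move=> empty; apply: functional_extensionality => p.
case cp: (c p) => [|mu b] //.
by have := congr1 (fun h => h (p, mu.1.2)) empty; rewrite /p2p_of_sb cp /= eqxx.
Qed.

Lemma p2p_completable : shuffle_completable (p2p P V).
Proof. by apply: (@fifo_completable P V _ (fun p q => (p, q))) => p q p' q' []. Qed.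

Lemma sb_completable : shuffle_completable (sb P V).
Proof. exact: (@fifo_completable P V _ (fun p _ => p)). Qed.

End Refinements.

Theorem lemma7p9 (P : finType) (V : eqType) (G : glts P V) :
  global_protocol G ->
  (implementable G (bag P V) -> implementable G (p2p P V)) /\
  (implementable G (p2p P V) -> implementable G (sb P V)).
Proof.
move=> _; split.
  apply: (implementable_sim (F := @bag_of_p2p P V) (inv := @p2p_addressed P V)).
  - by move=> pq mu.
  - by apply: functional_extensionality => u; apply: functional_extensionality.
  - exact: bag_of_p2p_step.
  - exact: bag_of_p2p_empty.
  - exact: p2p_completable.
apply: (implementable_sim (F := @p2p_of_sb P V) (inv := @sb_addressed P V)).
- by move=> p mu.
- by apply: functional_extensionality.
- exact: p2p_of_sb_step.
- by move=> c _; apply: p2p_of_sb_empty.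
- exact: sb_completable.
Qed.
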